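(* Let $G$ be a finite group of order $n$ and $f:G\to\mathbb{Z}$ a class function with $f(g)=f(g^{-1})$ for all $g\in G$. Then all eigenvalues of the Cayley colour graph $\Gamma_f=\operatorname{Cay}(G,f)$ are integers if and only if $f^h=f$ for all $h\in\mathbb{Z}_n^*$.
   Context: $\mathbb{Z}_n^*$ is the unit group of $\mathbb{Z}/n\mathbb{Z}$; $f^h(g)=f(g^h)$. The Cayley colour graph $\operatorname{Cay}(G,f)$ has vertex set $G$ and adjacency matrix $[f(gh^{-1})]_{g,h\in G}$; its eigenvalues are those of this matrix. *)

From HB Require Import structures.
From mathcomp Require Import all_boot all_order all_algebra all_fingroup all_field.
Set Implicit Arguments. Unset Strict Implicit. Unset Printing Implicit Defensive.
Import GRing.Theory Num.Theory.
Local Open Scope ring_scope.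

Definition cayley_mx (gT : finGroupType) (f : gT -> int) : 'M[algC]_#|gT| :=
  \matrix_(i, j) ((f (enum_val i * (enum_val j)^-1)%g)%:~R).

Definition fpow_inv (gT : finGroupType) (f : gT -> int) (h : nat) : Prop :=
  forall g : gT, f (g ^+ h)%g = f g.

From mathcomp Require Import all_boot all_order all_algebra all_fingroup all_field.
From mathcomp Require Import cyclic all_character.
From mathcomp Require Import ring.
Set Implicit Arguments. Unset Strict Implicit. Unset Printing Implicit Defensive.
Import GRing.Theory Num.Theory.
Local Open Scope ring_scope.

(* The adjacency matrix of Cay(G, f) is the matrix of convolution by f.  When f
   is a class function, the central idempotents e_chi = chi(1)/|G| chi of the
   irreducible characters resolve the identity and are eigenvectors, so the
   spectrum is { w_chi(f) = (sum_x f(x) chi(x^-1)) / chi(1) }.  These numbers are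
   algebraic integers, hence integers iff they are rational, i.e. iff they are
   fixed by every automorphism of algC.  An automorphism acting on |G|-th roots
   of unity as z |-> z^h maps w_chi(f^h) to w_chi(f), and a class function is
   determined by its w_chi; so all eigenvalues are rational iff f^h = f for
   every h prime to |G|. *)

Lemma eigenvalue_resolution (F : fieldType) (n : nat) (I : finType)
    (A : 'M[F]_n) (E : I -> 'M[F]_n) (w : I -> F) :
    \sum_i E i = 1%:M -> (forall i, A *m E i = w i *: E i) ->
    (forall i, E i *m A = w i *: E i) -> (forall i, E i != 0) ->
  forall a, eigenvalue A a <-> exists i, a = w i.
Proof.
move=> sumE AE EA nzE a; split.
  case/eigenvalueP => v vA nzv.
  have [i nz_vEi] : exists i, v *m E i != 0.
    apply/existsP; apply: contraR nzv; rewrite negb_exists => /forallP vE0.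
    rewrite -[v]mulmx1 -sumE mulmx_sumr big1 // => i _.
    exact/eqP/negPn.
  exists i; apply/eqP; rewrite -subr_eq0.
  have : (a - w i) *: (v *m E i) = 0.
    by rewrite scalerBl scalemxAl -vA -mulmxA AE -scalemxAr subrr.
  by move/eqP; rewrite scaler_eq0 (negbTE nz_vEi) orbF.
case=> i ->; apply/eigenvalueP.
have [r nz_r] : exists r, row r (E i) != 0.
  apply/existsP; apply: contraR (nzE i); rewrite negb_exists => /forallP rE0.
  by apply/eqP/row_matrixP => r; rewrite row0; apply/eqP/negPn.
by exists (row r (E i)); rewrite // -row_mul EA linearZ.
Qed.

Lemma eigenvalue_map_int_mx_Aint n (A : 'M[int]_n) a :
  eigenvalue (map_mx intr A) a -> a \in Aint.
Proof.
rewrite eigenvalue_root_char -map_char_poly => /root_monic_Aint; apply.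
  exact/monic_map/char_poly_monic.
by apply/polyOverP => i; rewrite coef_map intr_int.
Qed.

Lemma eigenvalue_cayley_mx_Aint (gT : finGroupType) (f : gT -> int) a :
  eigenvalue (cayley_mx f) a -> a \in Aint.
Proof.
pose A : 'M[int]_#|gT| := \matrix_(i, j) f (enum_val i * (enum_val j)^-1)%g.
have -> : cayley_mx f = map_mx intr A.
  by apply/matrixP => i j; rewrite !mxE.
exact: eigenvalue_map_int_mx_Aint.
Qed.

Lemma aut_unity_root_exp (u : {rmorphism algC -> algC}) n : (0 < n)%N ->
  exists k, coprime k n /\ forall z, z ^+ n = 1 -> u z = z ^+ k.
Proof.
move=> n_gt0; have [z prim_z] := C_prim_root_exists n_gt0.
have prim_uz : n.-primitive_root (u z) by rewrite fmorph_primitive_root.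
have [k Dk] := prim_rootP prim_z (prim_expr_order prim_uz).
exists k; split; first by rewrite -(prim_root_exp_coprime k prim_z) -Dk.
by move=> x /(prim_rootP prim_z) [j ->]; rewrite rmorphXn Dk exprAC.
Qed.

Lemma aut_char_exp (gT : finGroupType) (G : {group gT}) (chi : 'CF(G))
    (u : {rmorphism algC -> algC}) k :
    chi \is a character -> (forall z, z ^+ #|G| = 1 -> u z = z ^+ k) ->
  forall x, x \in G -> u (chi x) = chi (x ^+ k)%g.
Proof.
move=> Nchi uE x Gx; have sXG : <[x]>%g \subset G by rewrite cycle_subG.
have [r Dr] := char_sum_irr (cfRes_char <[x]>%g Nchi).
rewrite -(cfResE _ sXG (cycle_id x)) -(cfResE _ sXG (mem_cycle x k)) Dr.
rewrite !sum_cfunE rmorph_sum; apply: eq_bigr => j _.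
have lin_j := irr_cyclic_lin j (cycle_cyclic x).
rewrite lin_charX ?cycle_id //; apply: uE.
have /dvdnP [q ->] : (#[x]%g %| #|G|)%N by rewrite order_dvdG.
by rewrite mulnC exprM lin_char_unity_root ?cycle_id ?expr1n.
Qed.

Lemma Crat_aut_fixed (Qn : splittingFieldType rat) (QnC : {rmorphism Qn -> algC}) :
    galois 1 {:Qn} ->
    (forall nuQn : gal_of {:Qn},
       {nu : {rmorphism algC -> algC} | {morph QnC : a / nuQn a >-> nu a}}) ->
  forall a, (forall nu : {rmorphism algC -> algC}, nu (QnC a) = QnC a) ->
  QnC a \in Crat.
Proof.
move=> galQn gQnC a fix_a.
have : a \in fixedField 'Gal({:Qn} / 1)%g.
  apply/fixedFieldP; first exact: memvf.
  move=> nu _; have [nuC DnuC] := gQnC nu.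
  by apply: (fmorph_inj QnC); rewrite DnuC fix_a.
rewrite (galois_fixedField galQn) => /vlineP [r ->].
by rewrite alg_num_field fmorph_rat Crat_rat.
Qed.

Lemma expg_coprime_inj (gT : finGroupType) h :
  coprime h #|gT| -> injective (fun x : gT => x ^+ h)%g.
Proof.
rewrite coprime_sym -cardsT => co x y /=.
move/(congr1 (fun x => x ^+ expg_invn [set: gT] h)%g).
by rewrite !(expgK co) ?inE.
Qed.

Section GroupMatrix.

Variable gT : finGroupType.
Implicit Types phi psi : gT -> algC.

Definition group_mx phi : 'M[algC]_#|gT| :=
  \matrix_(i, j) phi (enum_val i * (enum_val j)^-1)%g.

Definition gconv phi psi (y : gT) : algC := \sum_x phi x * psi (x^-1 * y)%g.

Lemma eq_group_mx phi psi : phi =1 psi -> group_mx phi = group_mx psi.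
Proof. by move=> eq_phi; apply/matrixP => i j; rewrite !mxE eq_phi. Qed.

Lemma group_mx_sum (I : finType) (phi : I -> gT -> algC) :
  \sum_i group_mx (phi i) = group_mx (fun y => \sum_i phi i y).
Proof.
by apply/matrixP => i j; rewrite summxE !mxE; under eq_bigr do rewrite mxE.
Qed.

Lemma group_mxZ c phi : c *: group_mx phi = group_mx (fun y => c * phi y).
Proof. by apply/matrixP => i j; rewrite !mxE. Qed.

Lemma group_mx_delta1 : group_mx (fun y => (y == 1%g)%:R) = 1%:M.
Proof.
by apply/matrixP => i j; rewrite !mxE -eq_mulgV1 (inj_eq enum_val_inj).
Qed.

Lemma mul_group_mx phi psi :
  group_mx phi *m group_mx psi = group_mx (gconv phi psi).
Proof.
apply/matrixP => i j; rewrite !mxE /gconv.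
rewrite (reindex (@enum_rank gT)) /=; last first.
  by exists enum_val => x _; rewrite ?enum_rankK ?enum_valK.
under eq_bigr do rewrite !mxE enum_rankK.
rewrite (reindex_inj (inj_comp (mulIg (enum_val i)) (@invg_inj gT))) /=.
by apply: eq_bigr => x _; rewrite invMg invgK !mulgA mulgV mul1g.
Qed.

Lemma eq_gconv phi phi' psi psi' :
  phi =1 phi' -> psi =1 psi' -> gconv phi psi =1 gconv phi' psi'.
Proof.
by move=> eq_phi eq_psi y; apply: eq_bigr => x _; rewrite eq_phi eq_psi.
Qed.

Lemma gconv_suml (I : finType) (c : I -> algC) (phi : I -> gT -> algC) psi y :
  gconv (fun x => \sum_i c i * phi i x) psi y = \sum_i c i * gconv (phi i) psi y.
Proof.
rewrite /gconv; under eq_bigr do rewrite big_distrl.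
rewrite exchange_big; apply: eq_bigr => i _; rewrite mulr_sumr.
by apply: eq_bigr => x _; rewrite mulrA.
Qed.

Lemma gconvZr c phi psi y : gconv phi (fun x => c * psi x) y = c * gconv phi psi y.
Proof. by rewrite /gconv mulr_sumr; apply: eq_bigr => x _; rewrite mulrCA. Qed.

Lemma gconv_classC phi psi :
  (forall x y, phi (x ^ y)%g = phi x) -> gconv phi psi =1 gconv psi phi.
Proof.
move=> phiJ y; rewrite /gconv (reindex_inj (inj_comp (mulgI y) (@invg_inj gT))) /=.
apply: eq_bigr => z _; rewrite mulrC invMg invgK -mulgA mulVg mulg1.
by rewrite -(phiJ (z^-1 * y) z^-1)%g conjgE invgK !mulgA mulgV mul1g.
Qed.

End GroupMatrix.

Section ClassFunctionSpectrum.

Variable gT : finGroupType.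
Local Notation G := [set: gT]%G.

Let nG_neq0 : (#|gT|%:R : algC) != 0.
Proof. by rewrite -cardsT neq0CG. Qed.

Fact class_cfun_subproof (phi : gT -> algC) :
  (forall x y, phi (x ^ y)%g = phi x) -> is_class_fun <<G>>%g [ffun x => phi x].
Proof.
by move=> phiJ; rewrite genGid; apply: intro_class_fun => // x; rewrite inE.
Qed.

Definition class_cfun phi phiJ : 'CF(G) := Cfun 0 (@class_cfun_subproof phi phiJ).

Lemma class_cfunE phi phiJ x : @class_cfun phi phiJ x = phi x.
Proof. exact: cfunE. Qed.

Fact cfPow_subproof (phi : 'CF(G)) h x y : phi ((x ^ y) ^+ h)%g = phi (x ^+ h)%g.
Proof. by rewrite -conjXg cfunJ ?inE. Qed.

Definition cfPow (phi : 'CF(G)) h : 'CF(G) := class_cfun (cfPow_subproof phi h).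

Lemma cfPowE phi h x : cfPow phi h x = phi (x ^+ h)%g.
Proof. exact: class_cfunE. Qed.

Definition irr_idem (i : Iirr G) (y : gT) : algC :=
  'chi_i 1%g / #|gT|%:R * 'chi_i y.

Definition cf_eigen (phi : 'CF(G)) (i : Iirr G) : algC :=
  '[phi, 'chi_i] * #|gT|%:R / 'chi_i 1%g.

Lemma gconv_irr (i j : Iirr G) y :
  gconv 'chi_j 'chi_i y = (i == j)%:R * (#|gT|%:R * ('chi_i y / 'chi_i 1%g)).
Proof.
rewrite mulrCA -(generalized_orthogonality_relation y i j) cardsT.
rewrite mulrA mulfV // mul1r /gconv (reindex_inj invg_inj) /=.
under [RHS]eq_bigl do rewrite inE.
by apply: eq_bigr => x _; rewrite invgK mulrC.
Qed.

Lemma sum_irr_idem y : \sum_i irr_idem i y = (y == 1%g)%:R.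
Proof.
have := cfRegE G y; rewrite cfReg_sum sum_cfunE cardsT => regE.
transitivity (#|gT|%:R^-1 * \sum_i ('chi[G]_i 1%g *: 'chi_i) y).
  rewrite mulr_sumr; apply: eq_bigr => i _.
  by rewrite cfunE /irr_idem mulrA [_^-1 * _]mulrC.
by rewrite regE; case: (y == 1%g); rewrite ?mulr0 // mulVf.
Qed.

Lemma gconv_cf_irr_idem (phi : 'CF(G)) k y :
  gconv phi (irr_idem k) y = cf_eigen phi k * irr_idem k y.
Proof.
have phiE x : phi x = \sum_i '[phi, 'chi_i] * 'chi_i x.
  rewrite {1}(cfun_sum_cfdot phi) sum_cfunE.
  by apply: eq_bigr => i _; rewrite cfunE.
rewrite (eq_gconv phiE (frefl _)) gconv_suml (bigD1 k) //= big1 ?addr0.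
  rewrite gconvZr gconv_irr eqxx mul1r /cf_eigen /irr_idem.
  by field; rewrite nG_neq0 irr1_neq0.
move=> i /negbTE k'i.
by rewrite /irr_idem gconvZr gconv_irr eq_sym k'i !(mul0r, mulr0).
Qed.

Lemma group_mx_irr_idem_neq0 k : group_mx (irr_idem k) != 0.
Proof.
apply/eqP => /matrixP /(_ (enum_rank 1%g) (enum_rank 1%g)) /eqP.
rewrite !mxE enum_rankK mulgV !mulf_eq0 invr_eq0.
by rewrite (negbTE (irr1_neq0 k)) (negbTE nG_neq0).
Qed.

Lemma eigenvalue_group_mx (phi : 'CF(G)) a :
  eigenvalue (group_mx phi) a <-> exists k, a = cf_eigen phi k.
Proof.
have phiJ x y : phi (x ^ y)%g = phi x by rewrite cfunJ ?inE.
apply: (eigenvalue_resolution (E := fun k => group_mx (irr_idem k))).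
- by rewrite group_mx_sum (eq_group_mx sum_irr_idem) group_mx_delta1.
- move=> k; rewrite mul_group_mx group_mxZ.
  exact/eq_group_mx/gconv_cf_irr_idem.
- move=> k; rewrite mul_group_mx group_mxZ; apply: eq_group_mx => y.
  by rewrite -gconv_classC // gconv_cf_irr_idem.
- exact: group_mx_irr_idem_neq0.
Qed.

Lemma cf_eigen_sum (phi : 'CF(G)) k :
  cf_eigen phi k = (\sum_x phi x * 'chi_k x^-1%g) / 'chi_k 1%g.
Proof.
rewrite /cf_eigen cfdotE cardsT (mulrAC #|gT|%:R^-1) mulVf // mul1r.
by under eq_bigl do rewrite inE; under eq_bigr do rewrite -irr_inv.
Qed.

Lemma cf_eigen_inj (phi psi : 'CF(G)) :
  (forall k, cf_eigen phi k = cf_eigen psi k) -> phi = psi.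
Proof.
move=> eq_eigen; rewrite (cfun_sum_cfdot phi) (cfun_sum_cfdot psi).
apply: eq_bigr => k _; congr (_ *: _); have := eq_eigen k.
by move/(mulIf (invr_neq0 (irr1_neq0 k)))/(mulIf nG_neq0).
Qed.

Lemma aut_cf_eigen_cfPow (u : {rmorphism algC -> algC}) h (phi : 'CF(G)) k :
    coprime h #|gT| -> (forall z, z ^+ #|gT| = 1 -> u z = z ^+ h) ->
    (forall x, u (phi x) = phi x) ->
  u (cf_eigen (cfPow phi h) k) = cf_eigen phi k.
Proof.
move=> co uE u_phi; rewrite -cardsT in uE.
have u_chi x : u ('chi_k x) = 'chi_k (x ^+ h)%g.
  by rewrite (aut_char_exp (irr_char k) uE) ?inE.
rewrite !cf_eigen_sum fmorph_div rmorph_sum u_chi expg1n; congr (_ / _).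
rewrite [RHS](reindex_inj (expg_coprime_inj co)); apply: eq_bigr => x _.
by rewrite rmorphM cfPowE u_chi expgVn; congr (_ * _); apply: u_phi.
Qed.

Lemma cf_eigen_Crat (phi : 'CF(G)) k :
    (forall x, phi x \in Crat) ->
    (forall nu : {rmorphism algC -> algC}, nu (cf_eigen phi k) = cf_eigen phi k) ->
  cf_eigen phi k \in Crat.
Proof.
move=> Qphi fix_eigen.
have [Qn galQn [QnC gQnC [_ _ QnG]]] := group_num_field_exists G.
pose a x := sval (QnG _ _ 'chi_k (irr_char k) x (order_dvdG (in_setT x))).
have Da x : QnC (a x) = 'chi_k x by rewrite /a; case: (QnG _ _ _ _ _ _).
pose b := (\sum_x ratr (getCrat (phi x)) * a x^-1%g) / a 1%g.
have Db : QnC b = cf_eigen phi k.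
  rewrite cf_eigen_sum fmorph_div rmorph_sum Da; congr (_ / _).
  by apply: eq_bigr => x _; rewrite rmorphM fmorph_rat Da getCratK.
by rewrite -Db; apply: (Crat_aut_fixed galQn gQnC) => nu; rewrite Db.
Qed.

End ClassFunctionSpectrum.

Theorem mainTheorem8 (gT : finGroupType) (f : gT -> int)
  (hclass : forall x y : gT, f (x ^ y)%g = f x)
  (hsym : forall x : gT, f (x^-1)%g = f x) :
  (forall a : algC, eigenvalue (cayley_mx f) a -> a \is a Num.int) <->
  (forall h : nat, coprime h #|gT| -> fpow_inv f h).
Proof.
(* hsym only makes Cay(G, f) undirected; the equivalence does not need it. *)
have fJ x y : ((f (x ^ y)%g)%:~R : algC) = (f x)%:~R by rewrite hclass.
pose phi := class_cfun fJ.
have Dmx : cayley_mx f = group_mx phi.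
  by apply/matrixP => i j; rewrite !mxE class_cfunE.
have u_phi (u : {rmorphism algC -> algC}) x : u (phi x) = phi x.
  by rewrite class_cfunE rmorph_int.
split=> [eig_int h co g | phi_pow a eig_a].
  have [u uE] := Qn_aut_exists co.
  suff /cfunP/(_ g) : cfPow phi h = phi by rewrite cfPowE !class_cfunE => /intr_inj.
  apply: cf_eigen_inj => k; apply: (fmorph_inj u).
  rewrite aut_cf_eigen_cfPow // aut_intr //.
  by apply: eig_int; rewrite Dmx eigenvalue_group_mx; exists k.
apply: (Cint_rat_Aint _ (eigenvalue_cayley_mx_Aint eig_a)).
move: eig_a; rewrite Dmx eigenvalue_group_mx => -[k ->].
apply: cf_eigen_Crat => [x | u]; first by rewrite class_cfunE rpred_int.
have nG_gt0 : (0 < #|gT|)%N by rewrite -cardsT cardG_gt0.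
have [h [co uE]] := aut_unity_root_exp u nG_gt0.
have phi_h : cfPow phi h = phi.
  by apply/cfunP => x; rewrite cfPowE !class_cfunE (phi_pow h co).
by rewrite -{1}phi_h aut_cf_eigen_cfPow.
Qed.
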